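(* Let $X=X(\mathbb{Z}_n,S)$ be a circulant graph and let $x,y$ be distinct vertices of $X$. If perfect state transfer occurs on $X$ from $d^*e_x$ to $d^*e_y$, then $n$ is even and $y=x+\frac{n}{2}$.
   Context: For $S\subseteq\mathbb{Z}_n\setminus\{0\}$ with $S=-S$, the circulant graph $X(\mathbb{Z}_n,S)$ has vertex set $\mathbb{Z}_n$ and edge set $\{\{x,y\}\mid y-x\in S\}$. For a graph with symmetric arc set $\mathcal{A}$ ($t((x,y))=y$, $(x,y)^{-1}=(y,x)$): boundary matrix $d_{x,a}=\frac{1}{\sqrt{\deg x}}\delta_{x,t(a)}$, shift matrix $R_{a,b}=\delta_{a,b^{-1}}$, $U=R(2d^*d-I_{\mathcal{A}})$; $e_x$ is the standard unit vector. Perfect state transfer from $\Phi$ to a distinct state $\Psi$ means $U^\tau\Phi=\gamma\Psi$ for some $\tau\in\mathbb{Z}_{\ge1}$, $|\gamma|=1$. *)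

From HB Require Import structures.
From mathcomp Require Import all_boot all_order all_algebra all_field.
From mathcomp Require Import algC.
Set Implicit Arguments. Unset Strict Implicit. Unset Printing Implicit Defensive.
Import Order.TTheory GRing.Theory Num.Theory.
Local Open Scope ring_scope.

(* Circulant graph X(Z_n, S): vertex set 'Z_n, {x,y} edge iff y - x \in S.
   Symmetric arc set: arcs are ordered pairs (x,y) with y - x \in S. *)
Definition arc (n : nat) (S : {set 'Z_n}) := {a : 'Z_n * 'Z_n | a.2 - a.1 \in S}.

Definition term n (S : {set 'Z_n}) (a : arc S) : 'Z_n := (val a).2.

Definition circ_deg n (S : {set 'Z_n}) (x : 'Z_n) : nat :=
  #|[set y : 'Z_n | y - x \in S]|.

Definition bd n (S : {set 'Z_n}) (x : 'Z_n) (a : arc S) : algC :=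
  if term a == x then (sqrtC (circ_deg S x)%:R)^-1 else 0.

Definition dsd n (S : {set 'Z_n}) (a b : arc S) : algC :=
  \sum_(x : 'Z_n) (bd x a)^* * bd x b.

Definition shiftR n (S : {set 'Z_n}) (a b : arc S) : algC :=
  if val a == ((val b).2, (val b).1) then 1 else 0.

Definition Umat n (S : {set 'Z_n}) (a b : arc S) : algC :=
  \sum_(c : arc S) shiftR a c * (2 * dsd c b - (c == b)%:R).

Definition Uapply n (S : {set 'Z_n}) (Phi : arc S -> algC) : arc S -> algC :=
  fun a => \sum_(b : arc S) Umat a b * Phi b.

Definition Upow n (S : {set 'Z_n}) (tau : nat) (Phi : arc S -> algC) :=
  iter tau (@Uapply n S) Phi.

Definition dstar_e n (S : {set 'Z_n}) (x : 'Z_n) : arc S -> algC :=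
  fun a => (bd x a)^*.

Definition PST n (S : {set 'Z_n}) (Phi Psi : arc S -> algC) : Prop :=
  Phi <> Psi /\
  exists tau : nat, (0 < tau)%N /\
    exists gamma : algC, `|gamma| = 1 /\
      forall a, Upow tau Phi a = gamma * Psi a.

From Pilot Require Import Defs.
From HB Require Import structures.
From mathcomp Require Import all_boot all_order all_algebra all_field.
From mathcomp Require Import algC zify.
From Stdlib Require Import FunctionalExtensionality.
Set Implicit Arguments. Unset Strict Implicit. Unset Printing Implicit Defensive.
Import Order.TTheory GRing.Theory Num.Theory.
Local Open Scope ring_scope.

(* An automorphism of the circulant graph permutes the arcs and commutes with
   U, so it carries perfect state transfer from d^*e_x to d^*e_y to perfect
   state transfer from d^*e_(f x) to d^*e_(f y), with the same time and phase.
   The translation by t = y - x and the reflection z |-> x + y - z both map x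
   to y, so U^tau d^*e_y is gamma times both d^*e_(y + t) and d^*e_x.  The
   states d^*e_z determine z, hence y + t = x, i.e. t has order 2 in Z_n:
   n is even and t = n/2. *)

Lemma circ_deg_card n (S : {set 'Z_n}) x : circ_deg S x = #|S|.
Proof.
rewrite /circ_deg -(card_preimset S (addIr (- x))).
by apply: eq_card => z; rewrite !inE.
Qed.

Section CirculantAutomorphism.
Variables (n : nat) (S : {set 'Z_n}) (f : 'Z_n -> 'Z_n).
Hypothesis f_inj : injective f.
Hypothesis f_diff : forall a b : 'Z_n, (f b - f a \in S) = (b - a \in S).

Definition arc_map (a : Defs.arc S) : Defs.arc S :=
  exist (fun p : 'Z_n * 'Z_n => p.2 - p.1 \in S) (f (sval a).1, f (sval a).2)
    (etrans (f_diff _ _) (proj2_sig a)).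

Lemma arc_map_inj : injective arc_map.
Proof.
move=> [[a1 a2] ha] [[b1 b2] hb] /(congr1 sval) /= [] /f_inj e1 /f_inj e2.
by subst; congr exist; apply: bool_irrelevance.
Qed.

Lemma bd_map x a : bd (f x) (arc_map a) = bd x a.
Proof. by rewrite /bd /term /= (inj_eq f_inj) !circ_deg_card. Qed.

Lemma dsd_map a b : dsd (arc_map a) (arc_map b) = dsd a b.
Proof.
rewrite /dsd (reindex_inj f_inj) /=.
by apply: eq_bigr => z _; rewrite !bd_map.
Qed.

Lemma shiftR_map a b : shiftR (arc_map a) (arc_map b) = shiftR a b.
Proof.
case: a b => [[a1 a2] ha] [[b1 b2] hb].
by rewrite /shiftR /= !xpair_eqE !(inj_eq f_inj).
Qed.

Lemma Umat_map a b : Umat (arc_map a) (arc_map b) = Umat a b.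
Proof.
rewrite /Umat (reindex_inj arc_map_inj) /=.
by apply: eq_bigr => c _; rewrite shiftR_map dsd_map (inj_eq arc_map_inj).
Qed.

Lemma Uapply_map (Phi' Phi : Defs.arc S -> algC) :
  (forall b, Phi' (arc_map b) = Phi b) ->
  forall a, Uapply Phi' (arc_map a) = Uapply Phi a.
Proof.
move=> ePhi a; rewrite /Uapply (reindex_inj arc_map_inj) /=.
by apply: eq_bigr => b _; rewrite Umat_map ePhi.
Qed.

Lemma Upow_map tau (Phi' Phi : Defs.arc S -> algC) :
  (forall b, Phi' (arc_map b) = Phi b) ->
  forall a, Upow tau Phi' (arc_map a) = Upow tau Phi a.
Proof. by move=> ePhi; elim: tau => [|t IH] a //=; apply: Uapply_map. Qed.

Lemma dstar_e_map x a : dstar_e (f x) (arc_map a) = dstar_e x a.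
Proof. by rewrite /dstar_e bd_map. Qed.

Lemma Upow_dstar_e_map tau gamma x y :
  (forall a : Defs.arc S, Upow tau (dstar_e x) a = gamma * dstar_e y a) ->
  forall a : Defs.arc S, Upow tau (dstar_e (f x)) a = gamma * dstar_e (f y) a.
Proof.
move=> transfer a; rewrite -(f_invF arc_map_inj a).
by rewrite (Upow_map _ (dstar_e_map x)) transfer dstar_e_map.
Qed.

End CirculantAutomorphism.

Lemma translation_diff n (S : {set 'Z_n}) (t a b : 'Z_n) :
  ((b + t) - (a + t) \in S) = (b - a \in S).
Proof. by rewrite opprD addrACA subrr addr0. Qed.

Lemma reflection_diff n (S : {set 'Z_n}) :
  (forall s, s \in S -> - s \in S) ->
  forall c a b : 'Z_n, ((c - b) - (c - a) \in S) = (b - a \in S).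
Proof.
move=> S_sym c a b; rewrite opprB addrC addrA addrNK.
by apply/idP/idP => /S_sym; rewrite opprB.
Qed.

Lemma PST_arcs_nonempty n (S : {set 'Z_n}) (Phi Psi : Defs.arc S -> algC) :
  PST Phi Psi -> S != set0.
Proof.
case=> Phi_neq _; apply/eqP => S0; apply: Phi_neq.
apply: functional_extensionality => -[a a_arc]; exfalso.
by move: a_arc; rewrite S0 inE.
Qed.

Lemma dstar_e_inj n (S : {set 'Z_n}) (x y : 'Z_n) :
  S != set0 -> (forall a : Defs.arc S, dstar_e x a = dstar_e y a) -> x = y.
Proof.
move=> S_nonempty eq_xy; have [//|neq_xy] := eqVneq x y.
have /set0Pn [s s_in] := S_nonempty.
pose a : Defs.arc S := exist (fun p : 'Z_n * 'Z_n => p.2 - p.1 \in S) (x - s, x)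
  (etrans (congr1 (mem S) (subKr x s)) s_in).
have := eq_xy a; rewrite /dstar_e /bd /term /= eqxx (negbTE neq_xy) conjC0.
move/eqP; rewrite conjC_eq0 invr_eq0 sqrtC_eq0 circ_deg_card pnatr_eq0.
by rewrite cards_eq0 (negbTE S_nonempty).
Qed.

Lemma Zp_order2 (n : nat) (t : 'Z_n) :
  (1 < n)%N -> t != 0 -> t + t = 0 -> ~~ odd n /\ t = (n %/ 2)%:R.
Proof.
case: n t => [|[|m]] // t _ t0 /(congr1 val) /eqP; rewrite -/(dvdn _ _).
case/dvdnP=> k double_t.
have t_pos : (0 < t)%N by rewrite lt0n.
have {}double_t : (t + t = m.+2)%N.
  have := ltn_ord t; rewrite /Zp_trunc /= in t_pos double_t *.
  by case: k double_t => [|[|k]]; nia.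
have -> : (m.+2 %/ 2 = t)%N.
  by rewrite -[in LHS]double_t divn2 addnn half_double.
by rewrite natr_Zp; split=> //; rewrite -double_t addnn odd_double.
Qed.

Theorem lemma4p2 (n : nat) (Hn : (1 < n)%N) (S : {set 'Z_n})
    (HS0 : 0 \notin S) (HSsym : forall s, s \in S -> - s \in S)
    (x y : 'Z_n) (Hxy : x != y) :
  @PST n S (@dstar_e n S x) (@dstar_e n S y) ->
  ~~ odd n /\ y = x + (n %/ 2)%:R.
Proof.
move=> pst; have S_nonempty := PST_arcs_nonempty pst.
case: pst => _ [tau [_ [gamma [gamma_norm transfer]]]].
have gamma_neq0 : gamma != 0 by rewrite -normr_eq0 gamma_norm oner_eq0.
pose t := y - x; have yE : y = x + t by rewrite addrC subrK.
have shifted := Upow_dstar_e_map (addIr t) (translation_diff S t) transfer.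
have reflected := Upow_dstar_e_map (inv_inj (subKr (x + y)))
  (reflection_diff HSsym (x + y)) transfer.
rewrite /= -yE in shifted; rewrite /= addrK addrAC subrr add0r in reflected.
have ytx : y + t = x.
  apply: (dstar_e_inj S_nonempty) => a; apply: (mulfI gamma_neq0).
  by rewrite -shifted reflected.
have t_neq0 : t != 0 by rewrite subr_eq0 eq_sym.
have tt0 : t + t = 0 by apply: (addrI x); rewrite addr0 addrA -yE.
by rewrite yE; case: (Zp_order2 Hn t_neq0 tt0) => -> ->.
Qed.
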